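(* Let $f:X\to Y$ be a local homeomorphism between metric spaces, where $X$ is complete and $Y$ is path-connected and locally $\mathcal R$-contractible. If there exists $\alpha>0$ such that $D_x^-f\ge\alpha$ for all $x\in X$, then $f$ is a covering projection.
   Context: A path $p:[0,1]\to Y$ is rectifiable if its length $\sup\sum_i d(p(t_i),p(t_{i+1}))$ (over partitions of $[0,1]$) is finite. $Y$ is locally $\mathcal R$-contractible if every $y_0\in Y$ has an open neighborhood $U$ with a continuous homotopy $H:U\times[0,1]\to U$ such that $H(y_0,t)=y_0$ for all $t$, $H(y,0)=y_0$, $H(y,1)=y$ for all $y\in U$, and each path $t\mapsto H(y,t)$ is rectifiable. For non-isolated $x\in X$, $D_x^-f=\liminf_{z\to x,\,z\neq x}\frac{d(f(z),f(x))}{d(z,x)}$; $X$ is assumed to have no isolated points. *)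

From Stdlib Require Import Reals.
Open Scope R_scope.

Section MetricDefs.

Definition is_metric {X : Type} (d : X -> X -> R) : Prop :=
  (forall x y, 0 <= d x y) /\
  (forall x y, d x y = 0 <-> x = y) /\
  (forall x y, d x y = d y x) /\
  (forall x y z, d x z <= d x y + d y z).

Definition open_in {X : Type} (d : X -> X -> R) (U : X -> Prop) : Prop :=
  forall x, U x -> exists e, 0 < e /\ forall y, d x y < e -> U y.

Definition cont_within {X Y : Type} (dX : X -> X -> R) (dY : Y -> Y -> R)
  (A : X -> Prop) (f : X -> Y) (x : X) : Prop :=
  forall e, 0 < e -> exists del, 0 < del /\
    forall x', A x' -> dX x x' < del -> dY (f x) (f x') < e.

Definition continuous_map {X Y : Type} (dX : X -> X -> R) (dY : Y -> Y -> R)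
  (f : X -> Y) : Prop :=
  forall x, cont_within dX dY (fun _ => True) f x.

Definition homeo_onto {X Y : Type} (dX : X -> X -> R) (dY : Y -> Y -> R)
  (f : X -> Y) (U : X -> Prop) (V : Y -> Prop) : Prop :=
  (forall x, U x -> cont_within dX dY U f x) /\
  (forall x, U x -> V (f x)) /\
  (forall x1 x2, U x1 -> U x2 -> f x1 = f x2 -> x1 = x2) /\
  exists g : Y -> X,
    (forall y, V y -> U (g y) /\ f (g y) = y) /\
    (forall y, V y -> cont_within dY dX V g y).

Definition local_homeomorphism {X Y : Type} (dX : X -> X -> R)
  (dY : Y -> Y -> R) (f : X -> Y) : Prop :=
  continuous_map dX dY f /\
  forall x, exists (U : X -> Prop) (V : Y -> Prop),
    open_in dX U /\ U x /\ open_in dY V /\ homeo_onto dX dY f U V.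

Definition cauchy_seq {X : Type} (d : X -> X -> R) (u : nat -> X) : Prop :=
  forall e, 0 < e -> exists N, forall m n, (N <= m)%nat -> (N <= n)%nat ->
    d (u m) (u n) < e.

Definition converges_to {X : Type} (d : X -> X -> R) (u : nat -> X) (l : X)
  : Prop :=
  forall e, 0 < e -> exists N, forall n, (N <= n)%nat -> d (u n) l < e.

Definition complete_metric {X : Type} (d : X -> X -> R) : Prop :=
  forall u, cauchy_seq d u -> exists l, converges_to d u l.

Definition dR (s t : R) : R := Rabs (s - t).

Definition unit_interval (t : R) : Prop := 0 <= t <= 1.

(* a path is a continuous map [0,1] -> Y (values outside [0,1] irrelevant) *)
Definition is_path {Y : Type} (dY : Y -> Y -> R) (p : R -> Y) : Prop :=
  forall t, unit_interval t -> cont_within dR dY unit_interval p t.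

Definition path_connected {Y : Type} (dY : Y -> Y -> R) : Prop :=
  forall y1 y2, exists p : R -> Y, is_path dY p /\ p 0 = y1 /\ p 1 = y2.

Definition is_partition (t : nat -> R) (n : nat) : Prop :=
  t O = 0 /\ t (S n) = 1 /\ forall i, (i <= n)%nat -> t i <= t (S i).

Definition partition_sum {Y : Type} (dY : Y -> Y -> R) (p : R -> Y)
  (t : nat -> R) (n : nat) : R :=
  sum_f_R0 (fun i => dY (p (t i)) (p (t (S i)))) n.

Definition rectifiable {Y : Type} (dY : Y -> Y -> R) (p : R -> Y) : Prop :=
  exists M, forall t n, is_partition t n -> partition_sum dY p t n <= M.

Definition locally_R_contractible {Y : Type} (dY : Y -> Y -> R) : Prop :=
  forall y0, exists U : Y -> Prop, open_in dY U /\ U y0 /\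
    exists H : Y -> R -> Y,
      (forall y t, U y -> unit_interval t -> U (H y t)) /\
      (forall y t, U y -> unit_interval t ->
         forall e, 0 < e -> exists del, 0 < del /\
           forall y' t', U y' -> unit_interval t' ->
             dY y y' < del -> dR t t' < del -> dY (H y t) (H y' t') < e) /\
      (forall t, unit_interval t -> H y0 t = y0) /\
      (forall y, U y -> H y 0 = y0) /\
      (forall y, U y -> H y 1 = y) /\
      (forall y, U y -> rectifiable dY (H y)).

(* "D_x^- f >= alpha", i.e.
   liminf_{z -> x, z <> x} d(f z, f x) / d(z, x) >= alpha, written out:
   for every beta < alpha the ratio is >= beta on some punctured ball at x. *)
Definition lower_dini_ge {X Y : Type} (dX : X -> X -> R) (dY : Y -> Y -> R)
  (f : X -> Y) (x : X) (alpha : R) : Prop :=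
  forall beta, beta < alpha -> exists del, 0 < del /\
    forall z, z <> x -> dX z x < del -> beta <= dY (f z) (f x) / dX z x.

Definition no_isolated_points {X : Type} (d : X -> X -> R) : Prop :=
  forall x e, 0 < e -> exists z, z <> x /\ d z x < e.

Definition evenly_covered {X Y : Type} (dX : X -> X -> R) (dY : Y -> Y -> R)
  (f : X -> Y) (V : Y -> Prop) : Prop :=
  exists (I : Type) (W : I -> X -> Prop),
    (forall i, open_in dX (W i)) /\
    (forall i j x, W i x -> W j x -> i = j) /\
    (forall x, V (f x) <-> exists i, W i x) /\
    (forall i, homeo_onto dX dY f (W i) V).

Definition covering_projection {X Y : Type} (dX : X -> X -> R)
  (dY : Y -> Y -> R) (f : X -> Y) : Prop :=
  continuous_map dX dY f /\
  forall y, exists V : Y -> Prop, open_in dY V /\ V y /\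
    evenly_covered dX dY f V.

End MetricDefs.

(* A path in Y of finite length starting at f x0 lifts to a unique path in X starting at x0.
   Uniqueness comes from local injectivity of f.  Existence follows by continuous induction
   along [0, 1]: a lift on [0, s] extends a little beyond s through a chart, and a lift on
   [0, s) converges as t -> s, because for any beta < alpha the Dini bound gives
   beta * d(q a, q b) <= length of p on [a, b], so an oscillating lift would make p infinitely
   long; completeness of X provides the limit.
   For y0 in Y take an R-contractible neighbourhood U with contraction H.  Each x0 over y0
   yields a section of f over U, y |-> endpoint of the lift of H(y, .) from x0.  Lifts of the
   jointly continuous family H(y, .) depend continuously on y (a tube-lemma argument), so
   these sections are continuous and their images are open; they are disjoint by uniqueness
   of lifts and cover f^-1(U) by lifting the reversed paths t |-> H(y, 1 - t). *)
From Stdlib Require Import Reals.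
From Stdlib Require Import Lra Lia List Classical ClassicalEpsilon ProofIrrelevance.
Open Scope R_scope.

Ltac interval_arith := unfold dR, Rmin, Rmax in *;
  repeat match goal with
  | |- context[Rle_dec ?a ?b] => destruct (Rle_dec a b)
  | H: context[Rle_dec ?a ?b] |- _ => destruct (Rle_dec a b)
  end; repeat match goal with |- _ /\ _ => split end; try split_Rabs; lra.

(* Continuous induction: the supremum of the points up to which [P] holds
   cannot lie below [b]. *)
Lemma real_interval_induction (P : R -> Prop) (a b : R) : a <= b ->
  (forall s, a <= s <= b -> (forall t, a <= t < s -> P t) ->
     exists eta, 0 < eta /\ forall t, a <= t <= b -> t < s + eta -> P t) ->
  forall t, a <= t <= b -> P t.
Proof.
  intros Hab Hstep.
  set (E := fun s => a <= s <= b /\ forall t, a <= t < s -> P t).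
  assert (HB : bound E) by (exists b; intros s [Hs _]; lra).
  assert (HE : exists s, E s) by (exists a; split; [lra| intros; lra]).
  destruct (completeness E HB HE) as [c [Hub Hlub]].
  assert (Hac : a <= c) by (apply Hub; split; [lra| intros; lra]).
  assert (Hcb : c <= b) by (apply Hlub; intros s [Hs _]; lra).
  assert (Hbelow : forall t, a <= t < c -> P t).
  { intros t Ht. apply NNPP; intro HP.
    assert (c <= t); [|lra].
    apply Hlub. intros s [Hs Hs2].
    destruct (Rle_dec s t) as [|Hn]; [lra|].
    exfalso; apply HP; apply Hs2; lra. }
  destruct (Hstep c (conj Hac Hcb) Hbelow) as [eta [Heta HP]].
  destruct (Rle_dec b c) as [Hbc|Hbc].
  - intros t Ht. apply HP; lra.
  - exfalso.
    assert (Hnext : E (Rmin (c + eta/2) b)).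
    { split; [interval_arith|]. intros t Ht. apply HP; interval_arith. }
    apply Hub in Hnext. interval_arith.
Qed.

Section Metric.
Variables (X : Type) (dX : X -> X -> R) (hX : is_metric dX).

Lemma dist_nonneg x y : 0 <= dX x y. Proof. apply hX. Qed.
Lemma dist_sym x y : dX x y = dX y x. Proof. apply hX. Qed.
Lemma dist_triangle x y z : dX x z <= dX x y + dX y z. Proof. apply hX. Qed.
Lemma dist_refl x : dX x x = 0. Proof. apply hX; reflexivity. Qed.
Lemma dist_eq0 x y : dX x y = 0 -> x = y. Proof. apply hX. Qed.

Lemma dist_small_eq x y : (forall e, 0 < e -> dX x y < e) -> x = y.
Proof.
  intros H. apply dist_eq0. destruct (Rle_dec (dX x y) 0).
  - pose proof (dist_nonneg x y); lra.
  - specialize (H (dX x y)). lra.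
Qed.
End Metric.
Arguments dist_nonneg {X dX} hX x y.
Arguments dist_sym {X dX} hX x y.
Arguments dist_triangle {X dX} hX x y z.
Arguments dist_refl {X dX} hX x.
Arguments dist_eq0 {X dX} hX x y.
Arguments dist_small_eq {X dX} hX x y.

Fixpoint increasing (l : list R) : Prop :=
  match l with
  | a :: ((b :: _) as l') => a <= b /\ increasing l'
  | _ => True
  end.

Lemma increasing_cons a l : increasing (a :: l) <->
  (match l with nil => True | b :: _ => a <= b end) /\ increasing l.
Proof. destruct l; simpl; tauto. Qed.

Lemma increasing_app l1 l2 c : increasing l1 -> increasing l2 ->
  Forall (fun u => u <= c) l1 -> Forall (fun u => c <= u) l2 -> increasing (l1 ++ l2).
Proof.
  induction l1 as [|a l1 IH]; intros H1 H2 F1 F2; [exact H2|].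
  rewrite <- app_comm_cons. apply increasing_cons.
  apply increasing_cons in H1 as [Ha H1].
  inversion F1; subst. split.
  - destruct l1 as [|b l1]; simpl.
    + destruct l2 as [|d l2]; auto. inversion F2; subst; lra.
    + exact Ha.
  - apply IH; auto.
Qed.

Lemma increasing_head_le a l : increasing (a :: l) -> Forall (Rle a) l.
Proof.
  revert a; induction l as [|b l IH]; intros a H; constructor.
  - apply H.
  - destruct H as [Hab H]. eapply Forall_impl; [|exact (IH b H)].
    intros u Hu; lra.
Qed.

Lemma increasing_reflect l : increasing l -> increasing (rev (map (fun t => 1 - t) l)).
Proof.
  induction l as [|a l IH]; simpl; auto.
  intros H. pose proof (increasing_head_le _ _ H) as Hb.
  apply increasing_cons in H as [_ H].
  apply increasing_app with (1 - a).
  - apply IH; auto.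
  - simpl; auto.
  - apply Forall_rev, Forall_map. eapply Forall_impl; [|exact Hb]. intros u Hu; lra.
  - constructor; [lra|constructor].
Qed.

Lemma increasing_nth l : increasing l ->
  forall i, (S i < length l)%nat -> nth i l 0 <= nth (S i) l 0.
Proof.
  induction l as [|a l IH]; intros H i Hi; simpl in Hi; [lia|].
  apply increasing_cons in H as [Ha H].
  destruct i as [|i].
  - destruct l as [|b l]; simpl in *; [lia| exact Ha].
  - simpl. apply IH; auto. lia.
Qed.

Section Chain.
Variables (Y : Type) (dY : Y -> Y -> R) (hY : is_metric dY).

Fixpoint chain_length (h : R -> Y) (l : list R) : R :=
  match l with
  | a :: ((b :: _) as l') => dY (h a) (h b) + chain_length h l'
  | _ => 0
  end.

Lemma chain_length_cons h a l : chain_length h (a :: l) =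
  match l with nil => 0 | b :: _ => dY (h a) (h b) end + chain_length h l.
Proof. destruct l; simpl; lra. Qed.

Lemma chain_length_app_ge h l1 l2 :
  chain_length h l1 + chain_length h l2 <= chain_length h (l1 ++ l2).
Proof.
  induction l1 as [|a l1 IH].
  - simpl; lra.
  - rewrite <- app_comm_cons, !chain_length_cons.
    destruct l1 as [|b l1].
    + simpl. destruct l2 as [|c l2]; simpl; [lra|].
      pose proof (dist_nonneg hY (h a) (h c)); lra.
    + simpl app in *. lra.
Qed.

Lemma chain_length_snoc h l b a :
  chain_length h (l ++ b :: a :: nil) = chain_length h (l ++ b :: nil) + dY (h b) (h a).
Proof.
  induction l as [|x l IH].
  - simpl; lra.
  - rewrite <- !app_comm_cons, !chain_length_cons, IH.
    destruct l; simpl; lra.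
Qed.

Lemma chain_length_rev h l : chain_length h (rev l) = chain_length h l.
Proof.
  induction l as [|a l IH]; [reflexivity|].
  rewrite chain_length_cons. simpl rev.
  destruct l as [|b l].
  - simpl; lra.
  - simpl rev. rewrite <- app_assoc. simpl app.
    rewrite chain_length_snoc. simpl rev in IH. rewrite IH, (dist_sym hY (h b)). lra.
Qed.

Lemma chain_length_map h g l : chain_length h (map g l) = chain_length (fun t => h (g t)) l.
Proof.
  induction l as [|a l IH]; [reflexivity|].
  simpl map. rewrite !chain_length_cons, IH. destruct l; reflexivity.
Qed.

Definition chain_bounded (p : R -> Y) : Prop :=
  exists M, forall l, increasing l -> Forall unit_interval l -> chain_length p l <= M.

Lemma partition_sum_chain_length (p : R -> Y) L a b :
  sum_f_R0 (fun i => dY (p (nth i (a :: b :: L) 0)) (p (nth (S i) (a :: b :: L) 0)))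
    (length (a :: b :: L) - 2) = chain_length p (a :: b :: L).
Proof.
  revert a b; induction L as [|c L IH]; intros a b.
  - simpl. lra.
  - replace (length (a :: b :: c :: L) - 2)%nat with (S (length L)) by (simpl; lia).
    rewrite decomp_sum by lia. simpl pred.
    specialize (IH b c).
    replace (length (b :: c :: L) - 2)%nat with (length L) in IH by (simpl; lia).
    change (chain_length p (a :: b :: c :: L)) with
      (dY (p a) (p b) + chain_length p (b :: c :: L)).
    rewrite <- IH. reflexivity.
Qed.

Lemma rectifiable_chain_bounded (p : R -> Y) : rectifiable dY p -> chain_bounded p.
Proof.
  intros [M HM]. exists M. intros l Hs Hf.
  set (L := 0 :: l ++ 1 :: nil).
  assert (Hl01 : Forall (fun u => 0 <= u <= 1) l) by exact Hf.
  assert (HsL : increasing L).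
  { unfold L. change (0 :: l ++ 1 :: nil) with ((0 :: nil) ++ (l ++ 1 :: nil)).
    apply increasing_app with 0; [simpl; auto | | |].
    - apply increasing_app with 1; [auto | simpl; auto | |].
      + eapply Forall_impl; [|exact Hl01]. intros; lra.
      + constructor; [lra|constructor].
    - constructor; [lra|constructor].
    - apply Forall_app; split.
      + eapply Forall_impl; [|exact Hl01]. intros; lra.
      + constructor; [lra|constructor]. }
  set (t := fun i => nth i L 0).
  assert (Hpart : is_partition t (length l)).
  { split; [reflexivity|]. split.
    - unfold t, L. simpl nth. rewrite app_nth2 by lia. rewrite Nat.sub_diag. reflexivity.
    - intros i Hi. unfold t. apply increasing_nth; auto.
      unfold L. simpl. rewrite length_app. simpl. lia. }
  specialize (HM t (length l) Hpart).
  assert (Hps : partition_sum dY p t (length l) = chain_length p L).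
  { unfold partition_sum, t.
    destruct l as [|a l'].
    - simpl. lra.
    - unfold L. simpl app.
      pose proof (partition_sum_chain_length p (l' ++ 1 :: nil) 0 a) as E.
      replace (length _ - 2)%nat with (length (a :: l')) in E; [exact E|].
      simpl. rewrite length_app. simpl. lia. }
  assert (chain_length p l <= chain_length p L).
  { unfold L. change (0 :: l ++ 1 :: nil) with ((0 :: nil) ++ (l ++ 1 :: nil)).
    pose proof (chain_length_app_ge p (0 :: nil) (l ++ 1 :: nil)).
    pose proof (chain_length_app_ge p l (1 :: nil)).
    simpl chain_length in *. lra. }
  lra.
Qed.

Lemma chain_bounded_reverse (p : R -> Y) :
  chain_bounded p -> chain_bounded (fun t => p (1 - t)).
Proof.
  intros [M HM]. exists M. intros l Hl Fl.
  rewrite <- chain_length_map, <- chain_length_rev.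
  apply HM.
  - apply increasing_reflect; auto.
  - apply Forall_rev, Forall_map. eapply Forall_impl; [|exact Fl].
    unfold unit_interval; intros; lra.
Qed.

End Chain.
Arguments chain_length {Y} dY h l.
Arguments chain_bounded {Y} dY p.

Definition continuous_on {W : Type} (dW : W -> W -> R) (q : R -> W) (a b : R) : Prop :=
  forall t, a <= t <= b -> cont_within dR dW (fun u => a <= u <= b) q t.

Section ContWithin.
Variables (Z W : Type) (dZ : Z -> Z -> R) (dW : W -> W -> R).

Lemma cont_within_mono (A B : Z -> Prop) (q : Z -> W) t :
  (forall u, A u -> B u) -> cont_within dZ dW B q t -> cont_within dZ dW A q t.
Proof.
  intros HAB H e He. destruct (H e He) as [d [Hd H']]. exists d; split; auto.
Qed.

Lemma cont_within_ext (A : Z -> Prop) (h q : Z -> W) t :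
  (forall u, A u -> h u = q u) -> A t ->
  cont_within dZ dW A q t -> cont_within dZ dW A h t.
Proof.
  intros Heq Ht H e He. destruct (H e He) as [d [Hd H']]. exists d; split; auto.
  intros x' Hx' Hd'. rewrite !Heq; auto.
Qed.

Lemma cont_within_comp {V : Type} (dV : V -> V -> R)
  (A : Z -> Prop) (B : V -> Prop) (p : Z -> V) (g : V -> W) t :
  cont_within dZ dV A p t -> (forall u, A u -> B (p u)) ->
  cont_within dV dW B g (p t) -> cont_within dZ dW A (fun u => g (p u)) t.
Proof.
  intros Hp HB Hg e He.
  destruct (Hg e He) as [d1 [Hd1 H1]].
  destruct (Hp d1 Hd1) as [d2 [Hd2 H2]].
  exists d2; split; auto.
Qed.

Lemma cont_within_const (hW : is_metric dW) (w : W) A t :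
  cont_within dZ dW A (fun _ => w) t.
Proof.
  intros e He. exists 1; split; [lra|]. intros. rewrite (dist_refl hW); auto.
Qed.
End ContWithin.
Arguments cont_within_mono {Z W dZ dW} A B q t.
Arguments cont_within_ext {Z W dZ dW} A h q t.
Arguments cont_within_comp {Z W dZ dW V} dV A B p g t.
Arguments cont_within_const {Z W dZ dW} hW w A t.

Lemma cont_within_split {W : Type} (dW : W -> W -> R) (D : R -> Prop) (h : R -> W) c t :
  (t <= c -> cont_within dR dW (fun u => D u /\ u <= c) h t) ->
  (c <= t -> cont_within dR dW (fun u => D u /\ c <= u) h t) ->
  cont_within dR dW D h t.
Proof.
  intros H1 H2 e He.
  destruct (Rle_dec t c) as [Htc|Htc]; destruct (Rle_dec c t) as [Hct|Hct].
  - destruct (H1 Htc e He) as [d1 [Hd1 K1]]. destruct (H2 Hct e He) as [d2 [Hd2 K2]].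
    exists (Rmin d1 d2). split; [apply Rmin_pos; auto|].
    intros x' Hx' Hd. destruct (Rle_dec x' c).
    + apply K1; [split; auto|]. pose proof (Rmin_l d1 d2); lra.
    + apply K2; [split; auto; lra|]. pose proof (Rmin_r d1 d2); lra.
  - destruct (H1 Htc e He) as [d1 [Hd1 K1]].
    exists (Rmin d1 (c - t)). split; [apply Rmin_pos; lra|].
    intros x' Hx' Hd. apply K1; [split; auto|]; interval_arith.
  - destruct (H2 Hct e He) as [d1 [Hd1 K1]].
    exists (Rmin d1 (t - c)). split; [apply Rmin_pos; lra|].
    intros x' Hx' Hd. apply K1; [split; auto|]; interval_arith.
  - lra.
Qed.

Lemma continuous_on_sub {W : Type} (dW : W -> W -> R) q a b a' b' :
  a <= a' -> b' <= b -> continuous_on dW q a b -> continuous_on dW q a' b'.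
Proof.
  intros H1 H2 H t Ht. apply (cont_within_mono _ (fun u => a <= u <= b)).
  - intros; lra.
  - apply H; lra.
Qed.

Lemma continuous_on_ext {W : Type} (dW : W -> W -> R) h q a b :
  (forall u, a <= u <= b -> h u = q u) -> continuous_on dW q a b -> continuous_on dW h a b.
Proof. intros Heq H t Ht. apply (cont_within_ext _ _ q); auto. Qed.

Lemma continuous_on_reverse {W : Type} (dW : W -> W -> R) q :
  continuous_on dW q 0 1 -> continuous_on dW (fun t => q (1 - t)) 0 1.
Proof.
  intros H t Ht e He. destruct (H (1 - t) ltac:(lra) e He) as [d [Hd K]].
  exists d; split; auto. intros x' Hx' Hdx. apply K; [lra|]. unfold dR in *.
  replace (1 - t - (1 - x')) with (- (t - x')) by ring. rewrite Rabs_Ropp; auto.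
Qed.

Definition left_approach (s : R) (n : nat) : R := s - s / (INR n + 1).

Lemma left_approach_range s n : 0 < s -> 0 <= left_approach s n < s.
Proof.
  intros Hs. unfold left_approach. pose proof (pos_INR n).
  assert (E : s / (INR n + 1) * (INR n + 1) = s) by (field; lra).
  assert (0 < s / (INR n + 1)) by (apply Rdiv_lt_0_compat; lra).
  nra.
Qed.

Lemma left_approach_eventually s tau : 0 < s -> tau < s ->
  exists N, forall n, (N <= n)%nat -> tau <= left_approach s n.
Proof.
  intros Hs Ht. destruct (INR_unbounded (s / (s - tau))) as [N HN].
  exists N. intros n Hn. apply le_INR in Hn. unfold left_approach.
  pose proof (pos_INR n).
  assert (Ez : s / (s - tau) * (s - tau) = s) by (field; lra).
  assert (E : s / (INR n + 1) * (INR n + 1) = s) by (field; lra).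
  assert (0 < s / (INR n + 1)) by (apply Rdiv_lt_0_compat; lra).
  nra.
Qed.

Definition jointly_continuous {Y W : Type} (dY : Y -> Y -> R) (dW : W -> W -> R)
  (D : Y -> Prop) (K : Y -> R -> W) : Prop :=
  forall y t, D y -> unit_interval t -> forall e, 0 < e -> exists del, 0 < del /\
    forall y' t', D y' -> unit_interval t' -> dY y y' < del -> dR t t' < del ->
      dW (K y t) (K y' t') < e.

Lemma jointly_continuous_slice {Y W : Type} (dY : Y -> Y -> R) (dW : W -> W -> R)
  (hY : is_metric dY) D K y :
  jointly_continuous dY dW D K -> D y -> continuous_on dW (K y) 0 1.
Proof.
  intros HK Dy t Ht e He. destruct (HK y t Dy Ht e He) as [d [Hd H]].
  exists d; split; auto. intros t' Ht' Hdt. apply H; auto. rewrite (dist_refl hY); auto.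
Qed.

Lemma tube_lemma {Y W : Type} (dY : Y -> Y -> R) (dW : W -> W -> R)
  (hY : is_metric dY) (hW : is_metric dW) (Phi : Y -> R -> W) (D : Y -> Prop) y1 a b :
  a <= b -> D y1 ->
  (forall u, a <= u <= b -> forall e, 0 < e -> exists sg, 0 < sg /\
     forall y u', D y -> a <= u' <= b -> dY y1 y < sg -> dR u u' < sg ->
       dW (Phi y1 u) (Phi y u') < e) ->
  forall e, 0 < e -> exists del, 0 < del /\ forall y, D y -> dY y1 y < del ->
     forall u, a <= u <= b -> dW (Phi y1 u) (Phi y u) < e.
Proof.
  intros Hab Dy1 Hc e He.
  apply (real_interval_induction (fun s => exists del, 0 < del /\
     forall y, D y -> dY y1 y < del -> forall u, a <= u <= s ->
       dW (Phi y1 u) (Phi y u) < e) a b Hab); [|lra].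
  intros s Hs IH.
  destruct (Hc s Hs (e/2) ltac:(lra)) as [sg [Hsg K]].
  assert (Knear : forall y u', D y -> a <= u' <= b -> dY y1 y < sg -> dR s u' < sg ->
             dW (Phi y1 u') (Phi y u') < e).
  { intros y u' Dy Hu' Hy Hd.
    pose proof (K y u' Dy Hu' Hy Hd).
    pose proof (K y1 u' Dy1 Hu' ltac:(rewrite (dist_refl hY); auto) Hd).
    pose proof (dist_triangle hW (Phi y1 u') (Phi y1 s) (Phi y u')).
    rewrite (dist_sym hW (Phi y1 u') (Phi y1 s)) in *. lra. }
  set (s0 := Rmax a (s - sg/2)).
  assert (Hs0 : a <= s0 <= s /\ s - s0 <= sg / 2) by (unfold s0; interval_arith).
  assert (P0 : exists del, 0 < del /\ forall y, D y -> dY y1 y < del ->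
     forall u, a <= u <= s0 -> dW (Phi y1 u) (Phi y u) < e).
  { destruct (Rlt_le_dec s0 s) as [Hlt|Hge]; [apply IH; lra|].
    exists sg. split; auto. intros y Dy Hy u Hu. apply Knear; [auto | lra | lra |].
    unfold s0 in *; interval_arith. }
  destruct P0 as [d0 [Hd0 K0]].
  exists sg. split; auto. intros t Ht Hts.
  exists (Rmin d0 sg). split; [apply Rmin_pos; auto|].
  intros y Dy Hy u Hu. pose proof (Rmin_l d0 sg). pose proof (Rmin_r d0 sg).
  destruct (Rle_dec u s0).
  - apply K0; auto; lra.
  - apply Knear; [auto | lra | lra | interval_arith].
Qed.

Section Lifting.
Variables (X Y : Type) (dX : X -> X -> R) (dY : Y -> Y -> R) (f : X -> Y).
Hypotheses (hX : is_metric dX) (hY : is_metric dY) (hloc : local_homeomorphism dX dY f).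

Definition is_chart (U : X -> Prop) (V : Y -> Prop) (g : Y -> X) : Prop :=
  open_in dX U /\ open_in dY V /\ (forall x, U x -> V (f x)) /\
  (forall x1 x2, U x1 -> U x2 -> f x1 = f x2 -> x1 = x2) /\
  (forall y, V y -> U (g y) /\ f (g y) = y) /\
  (forall y, V y -> cont_within dY dX V g y).

Lemma local_chart x : exists U V g, is_chart U V g /\ U x.
Proof.
  destruct hloc as [_ H].
  destruct (H x) as [U [V [HU [Hx [HV [_ [HfV [Hinj [g [Hg1 Hg2]]]]]]]]]].
  exists U, V, g. repeat split; auto; apply Hg1; auto.
Qed.

Lemma f_continuous x : cont_within dX dY (fun _ => True) f x.
Proof. apply hloc. Qed.

Lemma chart_inverse_left U V g x : is_chart U V g -> U x -> g (f x) = x.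
Proof.
  intros [_ [_ [HfV [Hinj [Hg _]]]]] Hx. apply Hinj; auto; apply Hg; auto.
Qed.

Definition is_lift (p : R -> Y) (x0 : X) (s : R) (q : R -> X) : Prop :=
  continuous_on dX q 0 s /\ (forall t, 0 <= t <= s -> f (q t) = p t) /\ q 0 = x0.

Lemma is_lift_restrict p x0 s q t : 0 <= t <= s -> is_lift p x0 s q -> is_lift p x0 t q.
Proof.
  intros Ht [H1 [H2 H3]]. split; [|split]; auto.
  - apply continuous_on_sub with 0 s; auto; lra.
  - intros u Hu; apply H2; lra.
Qed.

Lemma lift_unique (q1 q2 : R -> X) a b : a <= b ->
  continuous_on dX q1 a b -> continuous_on dX q2 a b ->
  (forall t, a <= t <= b -> f (q1 t) = f (q2 t)) -> q1 a = q2 a ->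
  forall t, a <= t <= b -> q1 t = q2 t.
Proof.
  intros Hab C1 C2 Hf Ha.
  apply real_interval_induction; auto.
  intros s Hs IH.
  assert (Es : q1 s = q2 s).
  { destruct (Req_dec s a) as [->|Hsa]; auto.
    apply (dist_small_eq hX). intros e He.
    destruct (C1 s Hs (e/2) ltac:(lra)) as [d1 [Hd1 K1]].
    destruct (C2 s Hs (e/2) ltac:(lra)) as [d2 [Hd2 K2]].
    set (t := Rmax a (s - Rmin d1 d2 / 2)).
    assert (Hmin : 0 < Rmin d1 d2) by (apply Rmin_pos; auto).
    assert (Ht : a <= t < s) by (unfold t; interval_arith).
    assert (Hdt : dR s t < Rmin d1 d2) by (unfold t; interval_arith).
    pose proof (Rmin_l d1 d2). pose proof (Rmin_r d1 d2).
    specialize (K1 t ltac:(lra) ltac:(lra)). specialize (K2 t ltac:(lra) ltac:(lra)).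
    rewrite (IH t Ht) in K1.
    pose proof (dist_triangle hX (q1 s) (q2 t) (q2 s)).
    rewrite (dist_sym hX (q2 t)) in *. lra. }
  destruct (local_chart (q1 s)) as [U [V [g [[HU [_ [_ [Hinj _]]]] HUx]]]].
  destruct (HU _ HUx) as [r [Hr HUr]].
  destruct (C1 s Hs r Hr) as [d1 [Hd1 K1]].
  destruct (C2 s Hs r Hr) as [d2 [Hd2 K2]].
  exists (Rmin d1 d2). split; [apply Rmin_pos; auto|].
  intros t Ht Hts. destruct (Rlt_le_dec t s) as [Hlt|Hge]; [apply IH; lra|].
  assert (dR s t < d1 /\ dR s t < d2) as [Ht1 Ht2] by interval_arith.
  apply Hinj; [apply HUr, K1; auto | apply HUr; rewrite Es; apply K2; auto | apply Hf; lra].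
Qed.

Lemma lift_on_chart U V g (p : R -> Y) (q : R -> X) a b : is_chart U V g -> a <= b ->
  continuous_on dX q a b -> continuous_on dY p a b ->
  (forall u, a <= u <= b -> f (q u) = p u) -> (forall u, a <= u <= b -> V (p u)) ->
  U (q a) -> forall u, a <= u <= b -> q u = g (p u).
Proof.
  intros Hch Hab Hq Hp Hf HV Ha.
  pose proof Hch as [_ [_ [_ [_ [Hg Hgc]]]]].
  apply lift_unique; auto.
  - intros u Hu. apply (cont_within_comp dY _ V); auto.
  - intros u Hu. rewrite Hf by auto. symmetry. apply Hg, HV; auto.
  - rewrite <- (chart_inverse_left U V g (q a)), Hf by (auto; lra). reflexivity.
Qed.

Lemma lift_glue U V g (p : R -> Y) x0 (q : R -> X) c d : is_chart U V g ->
  0 <= c <= d -> is_lift p x0 c q -> U (q c) ->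
  continuous_on dY p c d -> (forall t, c <= t <= d -> V (p t)) ->
  is_lift p x0 d (fun t => if Rle_dec t c then q t else g (p t)).
Proof.
  intros Hch Hcd [Hq [Hfq Hq0]] HUc Hp HV.
  pose proof Hch as [_ [_ [_ [_ [Hg Hgc]]]]].
  assert (Hgc' : g (p c) = q c).
  { rewrite <- Hfq by lra. apply (chart_inverse_left U V); auto. }
  split; [|split].
  - intros t Ht. apply cont_within_split with c.
    + intros Htc. apply (cont_within_ext _ _ q).
      * intros u [_ Hu]. destruct (Rle_dec u c); [reflexivity|lra].
      * split; [lra|auto].
      * apply (cont_within_mono _ (fun u => 0 <= u <= c)); [intros u [Hu1 Hu2]; lra|].
        apply Hq; lra.
    + intros Hct. apply (cont_within_ext _ _ (fun u => g (p u))).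
      * intros u [_ Hu]. destruct (Rle_dec u c); [|reflexivity].
        replace u with c by lra. auto.
      * split; [lra|auto].
      * apply (cont_within_comp dY _ V).
        -- apply (cont_within_mono _ (fun u => c <= u <= d)); [intros u [Hu1 Hu2]; lra|].
           apply Hp; lra.
        -- intros u [Hu1 Hu2]. apply HV; lra.
        -- apply Hgc, HV; lra.
  - intros t Ht. destruct (Rle_dec t c); [apply Hfq; lra|]. apply Hg, HV; lra.
  - destruct (Rle_dec 0 c); [auto|lra].
Qed.

Lemma lift_extend p x0 s q : 0 <= s <= 1 -> continuous_on dY p 0 1 -> is_lift p x0 s q ->
  exists eta, 0 < eta /\
    forall t, 0 <= t <= 1 -> t < s + eta -> exists q', is_lift p x0 t q'.
Proof.
  intros Hs Hp Hq.
  destruct (local_chart (q s)) as [U [V [g [Hch HUx]]]].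
  pose proof Hch as [_ [HV [HfV _]]].
  assert (Vps : V (p s)) by (destruct Hq as [_ [Hqf _]]; rewrite <- Hqf by lra; auto).
  destruct (HV _ Vps) as [rho [Hrho HVr]].
  destruct (Hp s Hs rho Hrho) as [del [Hdel Kp]].
  exists del. split; auto. intros t Ht Hts.
  destruct (Rle_dec t s) as [Hle|Hgt].
  - exists q. apply is_lift_restrict with s; [lra|auto].
  - eexists. apply (lift_glue U V g p x0 q s t); auto; [lra| |].
    + apply continuous_on_sub with 0 1; auto; lra.
    + intros u Hu. apply HVr, Kp; [lra|interval_arith].
Qed.

Section Dini.
Variables (alpha beta : R).
Hypotheses (hD : forall x, lower_dini_ge dX dY f x alpha) (hb : 0 < beta < alpha).

Lemma dini_local_bound (q : R -> X) (p : R -> Y) (D : R -> Prop) s :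
  D s -> cont_within dR dX D q s -> (forall t, D t -> f (q t) = p t) ->
  exists del, 0 < del /\
    forall t, D t -> dR s t < del -> beta * dX (q s) (q t) <= dY (p s) (p t).
Proof.
  intros Ds Hc Hf.
  destruct (hD (q s) beta ltac:(lra)) as [del [Hdel Hdini]].
  destruct (Hc del Hdel) as [d [Hd K]].
  exists d; split; auto. intros t Dt Hdt.
  destruct (classic (q t = q s)) as [E|E].
  - rewrite E, (dist_refl hX). pose proof (dist_nonneg hY (p s) (p t)); lra.
  - specialize (K t Dt Hdt). rewrite (dist_sym hX) in K.
    specialize (Hdini (q t) E K).
    assert (Hpos : 0 < dX (q t) (q s)).
    { destruct (dist_nonneg hX (q t) (q s)) as [H|H]; auto.
      exfalso; apply E; apply (dist_eq0 hX); auto. }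
    rewrite !Hf in Hdini by auto.
    apply (Rmult_le_compat_r (dX (q t) (q s))) in Hdini; [|lra].
    unfold Rdiv in Hdini. rewrite Rmult_assoc, Rinv_l, Rmult_1_r in Hdini by lra.
    rewrite (dist_sym hX (q s)), (dist_sym hY (p s)). exact Hdini.
Qed.

Lemma lift_dist_le_chain (q : R -> X) (p : R -> Y) a b : a <= b ->
  continuous_on dX q a b -> (forall t, a <= t <= b -> f (q t) = p t) ->
  exists l, increasing l /\ Forall (fun u => a <= u <= b) l /\
    beta * dX (q a) (q b) <= chain_length dY p l.
Proof.
  intros Hab Hc Hf.
  set (P := fun c => exists l, increasing l /\ Forall (fun u => a <= u <= c) l /\
                     beta * dX (q a) (q c) <= chain_length dY p l).
  apply (real_interval_induction P a b Hab); [|lra].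
  intros s Hs IH.
  destruct (dini_local_bound q p (fun u => a <= u <= b) s Hs (Hc s Hs) Hf)
    as [del [Hdel Hloc]].
  set (t0 := Rmax a (s - del/2)).
  assert (Ht0 : a <= t0 <= s /\ s - t0 < del) by (unfold t0; interval_arith).
  assert (Pt0 : P t0).
  { destruct (Rlt_le_dec t0 s) as [H|H]; [apply IH; lra|].
    replace t0 with a by (unfold t0 in *; interval_arith).
    exists nil. repeat split; auto. rewrite (dist_refl hX). simpl; lra. }
  exists del; split; auto. intros t Ht Hts.
  destruct (Rlt_le_dec t s) as [Hlt|Hge]; [apply IH; lra|].
  destruct Pt0 as [l0 [Hs0 [Hf0 Hb0]]].
  assert (Hl0 : Forall (fun u => a <= u <= t) l0).
  { eapply Forall_impl; [|exact Hf0]; simpl; intros; lra. }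
  exists (l0 ++ t0 :: s :: t :: nil). split; [|split].
  - apply increasing_app with t0; auto.
    + simpl; lra.
    + eapply Forall_impl; [|exact Hf0]; simpl; intros; lra.
    + repeat (apply Forall_cons; [simpl; lra|]); apply Forall_nil.
  - apply Forall_app; split; auto.
    repeat (apply Forall_cons; [simpl; lra|]); apply Forall_nil.
  - pose proof (chain_length_app_ge _ _ hY p l0 (t0 :: s :: t :: nil)) as Hsplit.
    simpl chain_length in Hsplit.
    pose proof (Hloc t0 ltac:(lra) ltac:(interval_arith)) as H0.
    pose proof (Hloc t ltac:(lra) ltac:(interval_arith)) as H1.
    pose proof (dist_triangle hX (q a) (q t0) (q t)).
    pose proof (dist_triangle hX (q t0) (q s) (q t)).
    rewrite (dist_sym hX (q s) (q t0)), (dist_sym hY (p s) (p t0)) in *.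
    nra.
Qed.

End Dini.

(* Lifts on the intervals [0, u], u < s, agree on overlaps, so one function lifts them all. *)
Lemma lift_patch p x0 s : (forall t, 0 <= t < s -> exists q, is_lift p x0 t q) ->
  exists Q, forall u, 0 <= u < s -> is_lift p x0 u Q.
Proof.
  intros IH.
  set (Lf := fun u => epsilon (inhabits (fun _ : R => x0)) (is_lift p x0 u)).
  assert (HLf : forall u, 0 <= u < s -> is_lift p x0 u (Lf u)).
  { intros u Hu. apply epsilon_spec. apply IH; auto. }
  set (Q := fun t => Lf ((t + s) / 2) t).
  assert (HQ : forall u, 0 <= u < s -> forall t, 0 <= t <= u -> Q t = Lf u t).
  { intros u Hu t Ht. unfold Q.
    set (m := Rmin u ((t + s) / 2)).
    assert (Hm : t <= m /\ m <= u /\ m <= (t + s)/2) by (unfold m; interval_arith).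
    destruct (HLf ((t + s) / 2) ltac:(lra)) as [A1 [A2 A3]].
    destruct (HLf u Hu) as [B1 [B2 B3]].
    apply (lift_unique _ _ 0 m); [lra| | | | congruence | lra].
    - apply continuous_on_sub with 0 ((t + s) / 2); auto; lra.
    - apply continuous_on_sub with 0 u; auto; lra.
    - intros t' Ht'. rewrite A2, B2; auto; lra. }
  exists Q. intros u Hu. destruct (HLf u Hu) as [B1 [B2 B3]]. split; [|split].
  - apply continuous_on_ext with (Lf u); [|exact B1]. intros; apply HQ; auto; lra.
  - intros t Ht. rewrite HQ with u t by (auto; lra). auto.
  - rewrite HQ with u 0 by (auto; lra). auto.
Qed.

Section LiftExistence.
Variables (alpha : R).
Hypotheses (hcomp : complete_metric dX) (halpha : 0 < alpha)
  (hD : forall x, lower_dini_ge dX dY f x alpha).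

Section LiftLimit.
Variables (p : R -> Y) (x0 : X) (s : R) (Q : R -> X).
Hypotheses (hs : 0 < s <= 1) (hp : continuous_on dY p 0 1) (hpb : chain_bounded dY p)
  (hQ : forall u, 0 <= u < s -> is_lift p x0 u Q).

(* By the Dini bound with [beta = alpha/2], each oscillation of size [e0] of the lift costs
   [alpha/2 * e0] of length of [p]. *)
Lemma lift_oscillation_chain e0 : 0 < e0 ->
  (forall tau, 0 <= tau < s ->
     exists a b, tau <= a <= b /\ b < s /\ e0 <= dX (Q a) (Q b)) ->
  forall N tau, 0 <= tau < s -> exists l, increasing l /\
    Forall (fun u => tau <= u < s) l /\ INR N * (alpha / 2 * e0) <= chain_length dY p l.
Proof.
  intros He0 Hosc N. induction N as [|N IHN]; intros tau Htau.
  - exists nil. simpl. repeat split; auto. lra.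
  - destruct (Hosc tau Htau) as [a [b [Ha [Hb He]]]].
    destruct (hQ b ltac:(lra)) as [C1 [C2 _]].
    destruct (lift_dist_le_chain alpha (alpha / 2) hD ltac:(lra) Q p a b ltac:(lra)
                ltac:(apply continuous_on_sub with 0 b; auto; lra)
                ltac:(intros; apply C2; lra)) as [l1 [S1 [F1 B1]]].
    destruct (IHN b ltac:(lra)) as [l2 [S2 [F2 B2]]].
    assert (F1' : Forall (fun u => tau <= u < s) l1).
    { eapply Forall_impl; [|exact F1]; simpl; intros; lra. }
    assert (F2' : Forall (fun u => tau <= u < s) l2).
    { eapply Forall_impl; [|exact F2]; simpl; intros; lra. }
    exists (l1 ++ l2). split; [|split].
    + apply increasing_app with b; auto.
      * eapply Forall_impl; [|exact F1]; simpl; intros; lra.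
      * eapply Forall_impl; [|exact F2]; simpl; intros; lra.
    + apply Forall_app; split; auto.
    + pose proof (chain_length_app_ge _ _ hY p l1 l2). rewrite S_INR. nra.
Qed.

Lemma lift_oscillation_vanishes e : 0 < e -> exists tau, 0 <= tau < s /\
  forall a b, tau <= a < s -> tau <= b < s -> dX (Q a) (Q b) < e.
Proof.
  intros He. apply NNPP; intro Hn.
  assert (Hosc : forall tau, 0 <= tau < s ->
            exists a b, tau <= a <= b /\ b < s /\ e <= dX (Q a) (Q b)).
  { intros tau Htau. apply NNPP; intro Hno. apply Hn. exists tau. split; auto.
    intros a b Ha Hb. apply Rnot_le_lt; intro Hab. apply Hno.
    destruct (Rle_dec a b).
    - exists a, b. repeat split; lra.
    - exists b, a. rewrite (dist_sym hX). repeat split; lra. }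
  destruct hpb as [M HM].
  assert (Hc : 0 < alpha / 2 * e) by nra.
  destruct (INR_unbounded (M / (alpha / 2 * e))) as [N HN].
  destruct (lift_oscillation_chain e He Hosc N 0 ltac:(lra)) as [l [Sl [Fl Bl]]].
  assert (chain_length dY p l <= M).
  { apply HM; auto. eapply Forall_impl; [|exact Fl]. unfold unit_interval; intros; lra. }
  assert (Ez : M / (alpha / 2 * e) * (alpha / 2 * e) = M) by (field; lra).
  nra.
Qed.

Lemma lift_converges_at : exists xs, forall e, 0 < e -> exists tau, 0 <= tau < s /\
  forall t, tau <= t < s -> dX (Q t) xs < e.
Proof.
  destruct (hcomp (fun n => Q (left_approach s n))) as [xs Hxs].
  - intros e He. destruct (lift_oscillation_vanishes e He) as [tau [Htau Ht]].
    destruct (left_approach_eventually s tau ltac:(lra) ltac:(lra)) as [N HN].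
    exists N. intros m n Hm Hn.
    pose proof (left_approach_range s m ltac:(lra)).
    pose proof (left_approach_range s n ltac:(lra)).
    apply Ht; split; try apply HN; auto; lra.
  - exists xs. intros e He.
    destruct (lift_oscillation_vanishes (e/2) ltac:(lra)) as [tau [Htau Ht]].
    destruct (left_approach_eventually s tau ltac:(lra) ltac:(lra)) as [N1 HN1].
    destruct (Hxs (e/2) ltac:(lra)) as [N2 HN2].
    exists tau. split; auto. intros t Hts.
    set (n := Nat.max N1 N2).
    specialize (HN2 n ltac:(lia)). specialize (HN1 n ltac:(lia)).
    pose proof (left_approach_range s n ltac:(lra)).
    specialize (Ht t (left_approach s n) Hts ltac:(lra)).
    pose proof (dist_triangle hX (Q t) (Q (left_approach s n)) xs). lra.
Qed.

Lemma lift_limit_over xs :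
  (forall e, 0 < e -> exists tau, 0 <= tau < s /\ forall t, tau <= t < s -> dX (Q t) xs < e) ->
  f xs = p s.
Proof.
  intros Hxs. apply (dist_small_eq hY). intros e He.
  destruct (f_continuous xs (e/2) ltac:(lra)) as [df [Hdf Kf]].
  destruct (hp s ltac:(lra) (e/2) ltac:(lra)) as [dp [Hdp Kp]].
  destruct (Hxs df Hdf) as [tau [Htau Kt]].
  set (t := Rmax tau (s - dp/2)).
  assert (Ht : tau <= t < s /\ s - t < dp) by (unfold t; interval_arith).
  specialize (Kt t ltac:(lra)). rewrite (dist_sym hX) in Kt.
  specialize (Kf (Q t) I Kt).
  specialize (Kp t ltac:(lra) ltac:(interval_arith)).
  destruct (hQ t ltac:(lra)) as [_ [C2 _]]. rewrite C2 in Kf by lra.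
  pose proof (dist_triangle hY (f xs) (p t) (p s)).
  rewrite (dist_sym hY (p t) (p s)) in *. lra.
Qed.

(* Near [s] the lift enters a chart around its limit point, through which it continues to [s]. *)
Lemma lift_at_limit : exists q, is_lift p x0 s q.
Proof.
  destruct lift_converges_at as [xs Hxs].
  pose proof (lift_limit_over xs Hxs) as Hps.
  destruct (local_chart xs) as [U [V [g [Hch HUx]]]].
  pose proof Hch as [HU [HV [HfV _]]].
  destruct (HU _ HUx) as [r [Hr HUr]].
  assert (Vps : V (p s)) by (rewrite <- Hps; auto).
  destruct (HV _ Vps) as [rho [Hrho HVr]].
  destruct (hp s ltac:(lra) rho Hrho) as [del [Hdel Kp]].
  destruct (Hxs r Hr) as [tau [Htau Kt]].
  set (c := Rmax tau (s - del/2)).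
  assert (Hc : tau <= c < s /\ s - c < del) by (unfold c; interval_arith).
  eexists. apply (lift_glue U V g p x0 Q c s Hch); [lra | apply hQ; lra | | |].
  - apply HUr. rewrite (dist_sym hX). apply Kt; lra.
  - apply continuous_on_sub with 0 1; auto; lra.
  - intros u Hu. apply HVr, Kp; [lra|interval_arith].
Qed.

End LiftLimit.

Lemma lift_exists p x0 : continuous_on dY p 0 1 -> chain_bounded dY p ->
  f x0 = p 0 -> exists q, is_lift p x0 1 q.
Proof.
  intros Hp Hpb H0.
  apply (real_interval_induction (fun s => exists q, is_lift p x0 s q) 0 1); [lra| |lra].
  intros s Hs IH.
  assert (Ps : exists q, is_lift p x0 s q).
  { destruct (Req_dec s 0) as [->|Hs0].
    - exists (fun _ => x0). split; [|split]; auto.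
      + intros t Ht. apply (cont_within_const hX).
      + intros t Ht. replace t with 0 by lra. auto.
    - destruct (lift_patch p x0 s IH) as [Q HQ].
      apply (lift_at_limit p x0 s Q); auto. lra. }
  destruct Ps as [q Hq].
  apply lift_extend with q; auto.
Qed.

End LiftExistence.

Section LiftFamily.
Variables (K : Y -> R -> Y) (D : Y -> Prop) (x0 : X) (Lam : Y -> R -> X) (y1 : Y).
Hypotheses (hK : jointly_continuous dY dY D K)
  (hLam : forall y, D y -> is_lift (K y) x0 1 (Lam y)) (hy1 : D y1).

Definition lifts_close_on (s : R) : Prop :=
  forall e, 0 < e -> exists del, 0 < del /\ forall y, D y -> dY y1 y < del ->
    forall t, 0 <= t <= s -> dX (Lam y1 t) (Lam y t) < e.

Lemma lifts_close_on_zero : lifts_close_on 0.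
Proof.
  intros e He. exists 1. split; [lra|]. intros y Dy Hy t Ht.
  replace t with 0 by lra.
  destruct (hLam y Dy) as [_ [_ ->]]. destruct (hLam y1 hy1) as [_ [_ ->]].
  rewrite (dist_refl hX). lra.
Qed.

(* On a window where the whole family stays in the codomain of one chart, every lift that
   starts in the chart domain is [g] composed with its path. *)
Lemma lifts_close_on_window U V g a b eta0 : is_chart U V g -> 0 <= a <= b -> b <= 1 ->
  0 < eta0 -> (forall y u, D y -> dY y1 y < eta0 -> a <= u <= b -> V (K y u)) ->
  U (Lam y1 a) ->
  forall e, 0 < e -> exists del, 0 < del /\ forall y, D y -> dY y1 y < del ->
    U (Lam y a) -> forall u, a <= u <= b -> dX (Lam y1 u) (Lam y u) < e.
Proof.
  intros Hch Ha Hb Heta0 HV HU1 e He.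
  pose proof Hch as [_ [_ [_ [_ [Hg Hgc]]]]].
  assert (Ident : forall y, D y -> dY y1 y < eta0 -> U (Lam y a) ->
            forall u, a <= u <= b -> Lam y u = g (K y u)).
  { intros y Dy Hy HUy. destruct (hLam y Dy) as [Lc [Lf _]].
    apply (lift_on_chart U V g); auto; try lra.
    - apply continuous_on_sub with 0 1; auto; lra.
    - apply continuous_on_sub with 0 1; [lra|lra|].
      apply (jointly_continuous_slice dY dY hY D); auto.
    - intros u Hu. apply Lf; lra. }
  assert (Hy1 : dY y1 y1 < eta0) by (rewrite (dist_refl hY); auto).
  destruct (tube_lemma dY dX hY hX (fun y u => g (K y u))
     (fun y => D y /\ dY y1 y < eta0) y1 a b ltac:(lra) (conj hy1 Hy1)) with (e := e)
     as [db [Hdb Kb]]; auto.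
  { intros u Hu e0 He0.
    destruct (Hgc _ (HV y1 u hy1 Hy1 Hu) e0 He0) as [s1 [Hs1 Ks1]].
    destruct (hK y1 u hy1 ltac:(split; lra) s1 Hs1) as [s2 [Hs2 Ks2]].
    exists s2. split; auto. intros y u' [Dy Hy] Hu' Hy2 Hdu.
    apply Ks1; [apply HV; auto|]. apply Ks2; auto. split; lra. }
  exists (Rmin eta0 db). split; [apply Rmin_pos; auto|].
  intros y Dy Hy HUy u Hu. pose proof (Rmin_l eta0 db). pose proof (Rmin_r eta0 db).
  rewrite (Ident y Dy ltac:(lra) HUy u Hu), (Ident y1 hy1 Hy1 HU1 u Hu).
  apply Kb; [split; [auto|lra] | lra | auto].
Qed.

Lemma lifts_close_on_step s : 0 <= s <= 1 ->
  (forall t, 0 <= t < s -> lifts_close_on t) ->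
  exists eta, 0 < eta /\ forall t, 0 <= t <= 1 -> t < s + eta -> lifts_close_on t.
Proof.
  intros Hs IH.
  destruct (hLam y1 hy1) as [L1c [L1f _]].
  destruct (local_chart (Lam y1 s)) as [U [V [g [Hch HUx]]]].
  pose proof Hch as [HU [HV [HfV _]]].
  destruct (HU _ HUx) as [r [Hr HUr]].
  assert (Vx : V (K y1 s)) by (rewrite <- L1f by lra; apply HfV; auto).
  destruct (HV _ Vx) as [rho [Hrho HVr]].
  destruct (hK y1 s hy1 Hs rho Hrho) as [eta0 [Heta0 K0]].
  destruct (L1c s Hs (r/2) ltac:(lra)) as [eta1 [Heta1 K1]].
  set (eta := Rmin eta0 eta1 / 2).
  assert (Heta : 0 < eta /\ 2 * eta <= eta0 /\ 2 * eta <= eta1).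
  { unfold eta. pose proof (Rmin_l eta0 eta1). pose proof (Rmin_r eta0 eta1).
    pose proof (Rmin_pos eta0 eta1 Heta0 Heta1). lra. }
  set (s0 := Rmax 0 (s - eta)).
  assert (Hs0 : 0 <= s0 <= s /\ s - s0 <= eta) by (unfold s0; interval_arith).
  assert (P0 : lifts_close_on s0).
  { destruct (Rlt_le_dec s0 s) as [Hlt|Hge]; [apply IH; lra|].
    replace s0 with 0 by (unfold s0 in *; interval_arith). apply lifts_close_on_zero. }
  exists eta. split; [lra|]. intros t Ht Hts e He.
  set (t' := Rmax t s0).
  assert (Ht' : s0 <= t' <= 1 /\ t <= t' /\ t' < s + eta) by (unfold t'; interval_arith).
  assert (Hnear1 : forall u, s0 <= u <= t' -> dX (Lam y1 s) (Lam y1 u) < r/2).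
  { intros u Hu. apply K1; [lra|interval_arith]. }
  destruct (lifts_close_on_window U V g s0 t' eta0 Hch ltac:(lra) ltac:(lra) Heta0)
    with (e := e) as [db [Hdb Kb]]; auto.
  { intros y u Dy Hy Hu. apply HVr, K0; [auto | unfold unit_interval; lra | auto | interval_arith]. }
  { apply HUr. pose proof (Hnear1 s0 ltac:(lra)). lra. }
  destruct (P0 (Rmin e (r/2)) ltac:(apply Rmin_pos; lra)) as [da [Hda Ka]].
  pose proof (Rmin_l e (r/2)). pose proof (Rmin_r e (r/2)).
  exists (Rmin da db). split; [apply Rmin_pos; auto|].
  intros y Dy Hy u Hu. pose proof (Rmin_l da db). pose proof (Rmin_r da db).
  destruct (Rle_dec u s0).
  - apply Rlt_le_trans with (Rmin e (r/2)); [apply Ka|]; auto; lra.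
  - apply Kb; [auto | lra | | lra].
    apply HUr.
    pose proof (Hnear1 s0 ltac:(lra)).
    pose proof (Ka y Dy ltac:(lra) s0 ltac:(lra)).
    pose proof (dist_triangle hX (Lam y1 s) (Lam y1 s0) (Lam y s0)). lra.
Qed.

Lemma lifts_close : lifts_close_on 1.
Proof.
  apply (real_interval_induction lifts_close_on 0 1); [lra| |lra].
  apply lifts_close_on_step.
Qed.

End LiftFamily.

Section Sheets.
Variables (alpha : R) (y0 : Y) (U : Y -> Prop) (H : Y -> R -> Y).
Hypotheses (hcomp : complete_metric dX) (halpha : 0 < alpha)
  (hD : forall x, lower_dini_ge dX dY f x alpha)
  (hU : open_in dY U) (hH : jointly_continuous dY dY U H)
  (hH0 : forall y, U y -> H y 0 = y0) (hH1 : forall y, U y -> H y 1 = y)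
  (hHrect : forall y, U y -> rectifiable dY (H y)).

Definition contraction_lift (x0 : X) (y : Y) : R -> X :=
  epsilon (inhabits (fun _ : R => x0)) (is_lift (H y) x0 1).

Lemma contraction_lift_spec x0 y : f x0 = y0 -> U y ->
  is_lift (H y) x0 1 (contraction_lift x0 y).
Proof.
  intros Hx0 Uy. unfold contraction_lift. apply epsilon_spec.
  apply (lift_exists alpha); auto.
  - apply (jointly_continuous_slice dY dY hY U); auto.
  - apply rectifiable_chain_bounded; auto.
  - rewrite hH0; auto.
Qed.

Definition sheet_map (x0 : X) (y : Y) : X := contraction_lift x0 y 1.

Definition sheet (x0 x : X) : Prop := U (f x) /\ sheet_map x0 (f x) = x.

Lemma sheet_map_section x0 y : f x0 = y0 -> U y -> f (sheet_map x0 y) = y.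
Proof.
  intros Hx0 Uy. destruct (contraction_lift_spec x0 y Hx0 Uy) as [_ [Lf _]].
  unfold sheet_map. rewrite Lf by lra. auto.
Qed.

Lemma sheet_map_continuous x0 y : f x0 = y0 -> U y -> cont_within dY dX U (sheet_map x0) y.
Proof.
  intros Hx0 Uy e He.
  destruct (lifts_close H U x0 (contraction_lift x0) y hH
              (fun y' Uy' => contraction_lift_spec x0 y' Hx0 Uy') Uy e He) as [d [Hd K]].
  exists d; split; auto. intros y' Uy' Hy'. apply K; auto; lra.
Qed.

Lemma sheet_map_injective xi xj y : f xi = y0 -> f xj = y0 -> U y ->
  sheet_map xi y = sheet_map xj y -> xi = xj.
Proof.
  intros Hi Hj Uy E.
  destruct (contraction_lift_spec xi y Hi Uy) as [Ic [If I0]].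
  destruct (contraction_lift_spec xj y Hj Uy) as [Jc [Jf J0]].
  assert (Erev : forall t, 0 <= t <= 1 ->
            contraction_lift xi y (1 - t) = contraction_lift xj y (1 - t)).
  { apply (lift_unique (fun t => contraction_lift xi y (1 - t))
                       (fun t => contraction_lift xj y (1 - t)) 0 1).
    - lra.
    - apply continuous_on_reverse; auto.
    - apply continuous_on_reverse; auto.
    - intros t Ht. rewrite If, Jf by lra. reflexivity.
    - replace (1 - 0) with 1 by ring. exact E. }
  specialize (Erev 1 ltac:(lra)). replace (1 - 1) with 0 in Erev by ring.
  rewrite I0, J0 in Erev. exact Erev.
Qed.

(* Lifting the reversed contraction path from [x] finds the sheet through [x]. *)
Lemma sheet_map_onto x : U (f x) -> exists x0, f x0 = y0 /\ sheet_map x0 (f x) = x.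
Proof.
  intros Ux. set (y := f x).
  set (p := fun t => H y (1 - t)).
  assert (Cp : continuous_on dY p 0 1).
  { apply continuous_on_reverse, (jointly_continuous_slice dY dY hY U); auto. }
  assert (Bp : chain_bounded dY p).
  { apply chain_bounded_reverse; auto. apply rectifiable_chain_bounded; auto. }
  destruct (lift_exists alpha hcomp halpha hD p x Cp Bp) as [q [Qc [Qf Q0]]].
  { unfold p. replace (1 - 0) with 1 by ring. rewrite hH1; auto. }
  assert (Hx0 : f (q 1) = y0).
  { rewrite Qf by lra. unfold p. replace (1 - 1) with 0 by ring. apply hH0; auto. }
  exists (q 1). split; auto.
  destruct (contraction_lift_spec (q 1) y Hx0 Ux) as [Lc [Lf L0]].
  assert (E : forall t, 0 <= t <= 1 -> contraction_lift (q 1) y t = q (1 - t)).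
  { apply (lift_unique _ _ 0 1).
    - lra.
    - exact Lc.
    - apply continuous_on_reverse; auto.
    - intros t Ht. rewrite Lf, Qf by lra. unfold p. f_equal. ring.
    - rewrite L0. f_equal. ring. }
  unfold sheet_map. rewrite E by lra. replace (1 - 1) with 0 by ring. auto.
Qed.

Lemma sheet_open x0 : f x0 = y0 -> open_in dX (sheet x0).
Proof.
  intros Hx0 x [Ux Ex].
  destruct (local_chart x) as [Uc [Vc [g [[HUc [_ [_ [Hinj _]]]] HUx]]]].
  destruct (HUc _ HUx) as [r [Hr HUr]].
  destruct (sheet_map_continuous x0 (f x) Hx0 Ux r Hr) as [d1 [Hd1 K1]].
  destruct (hU _ Ux) as [d2 [Hd2 K2]].
  destruct (f_continuous x (Rmin d1 d2) ltac:(apply Rmin_pos; auto)) as [d3 [Hd3 K3]].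
  exists (Rmin d3 r). split; [apply Rmin_pos; auto|].
  intros x' Hx'. pose proof (Rmin_l d3 r). pose proof (Rmin_r d3 r).
  pose proof (Rmin_l d1 d2). pose proof (Rmin_r d1 d2).
  specialize (K3 x' I ltac:(lra)).
  assert (Ux' : U (f x')) by (apply K2; lra).
  split; auto.
  specialize (K1 (f x') Ux' ltac:(lra)). rewrite Ex in K1.
  apply Hinj; [apply HUr; auto | apply HUr; lra |].
  apply sheet_map_section; auto.
Qed.

Lemma sheet_homeo x0 : f x0 = y0 -> homeo_onto dX dY f (sheet x0) U.
Proof.
  intros Hx0. split; [|split; [|split]].
  - intros x _. apply (cont_within_mono _ (fun _ => True)); auto.
    apply f_continuous.
  - intros x [Ux _]. exact Ux.
  - intros x1 x2 [_ E1] [_ E2] Ef. rewrite <- E1, <- E2, Ef. reflexivity.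
  - exists (sheet_map x0). split.
    + intros y Uy. pose proof (sheet_map_section x0 y Hx0 Uy) as Ef.
      split; auto. split; rewrite Ef; auto.
    + intros y Uy. apply sheet_map_continuous; auto.
Qed.

Lemma contractible_evenly_covered : evenly_covered dX dY f U.
Proof.
  exists {x0 : X | f x0 = y0}, (fun i => sheet (proj1_sig i)).
  split; [|split; [|split]].
  - intros [x0 Hx0]. apply sheet_open; auto.
  - intros [xi Hi] [xj Hj] x [Ux Ei] [_ Ej]. simpl in Ei, Ej.
    assert (xi = xj) as <- by (apply (sheet_map_injective xi xj (f x)); congruence).
    f_equal. apply proof_irrelevance.
  - intros x. split.
    + intros Ux. destruct (sheet_map_onto x Ux) as [x0 [Hx0 E]].
      exists (exist _ x0 Hx0). split; auto.
    + intros [i [Ux _]]. exact Ux.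
  - intros [x0 Hx0]. apply sheet_homeo; auto.
Qed.

End Sheets.
End Lifting.

Theorem mainTheorem11 (X Y : Type) (dX : X -> X -> R) (dY : Y -> Y -> R)
  (f : X -> Y)
  (hX : is_metric dX) (hY : is_metric dY)
  (hiso : no_isolated_points dX)
  (hloc : local_homeomorphism dX dY f)
  (hcomp : complete_metric dX)
  (hpc : path_connected dY)
  (hRc : locally_R_contractible dY)
  (alpha : R) (halpha : 0 < alpha)
  (hD : forall x, lower_dini_ge dX dY f x alpha) :
  covering_projection dX dY f.
Proof.
  (* Neither is
     [hpc]: it only makes the fibres nonempty, which [covering_projection] does not demand. *)
  split; [exact (proj1 hloc)|].
  intros y0.
  destruct (hRc y0) as [U [HU [Uy0 [H [_ [Hjoint [_ [H0 [H1 Hrect]]]]]]]]].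
  exists U. repeat split; auto.
  exact (contractible_evenly_covered X Y dX dY f hX hY hloc alpha y0 U H
           hcomp halpha hD HU Hjoint H0 H1 Hrect).
Qed.
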